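(* In the modified multi-phase process described in the context, every element $x\in S^-_{1/6}$ that is considered by the process passes the preliminary test and all the following $\eta$ tests with probability at least $1-\frac{5}{n^2}$.
   Context: Let $n\ge2$ be an integer such that $m=n/\log_2 n$ is an integer, and let $S'$ be a set of $m$ distinct elements of a totally ordered set. For $\rho\in(0,1]$, $S^-_\rho$ denotes the set of the $\lceil \rho m\rceil$ smallest elements of $S'$ and $S^+_\rho=S'\setminus S^-_\rho$. There are two oracles $\mathcal{O}_1,\mathcal{O}_2$ which can be queried with an element $x\in S'$ and answer ''relevant'' or ''not relevant'' in constant time, all answers being mutually independent; for constants $p_1,p_2\in[0,\tfrac12)$: $\mathcal{O}_1$ reports $x$ relevant with probability at least $1-p_1$ if $x\in S^-_{1/6}$ and at most $p_1$ if $x\in S^+_{1/3}$; $\mathcal{O}_2$ reports $x$ relevant with probability at least $1-p_2$ if $x\in S^-_{1/3}$ and at most $p_2$ if $x\in S^+_{3/4}$. For $q\in[0,\tfrac12)$ let $c_q=\lceil 4(1-q)/(1-2q)^2\rceil$. Let $\eta = 1+\lceil \log_2 \frac{n}{\log_2 n}\rceil$. Modified multi-phase process: the elements of $S'$ are considered one at a time. For the current element $x$, a preliminary test is performed consisting of $8c_{p_1}\lceil \ln n\rceil+1$ queries to $\mathcal{O}_1$ on $x$; it is passed if the majority report $x$ relevant, otherwise $x$ is discarded and the next element is considered. Then, for $i=1,\dots,\eta$, the $i$-th test consists of $2\lceil 2^i\ln n\rceil c_{p_2}+1$ queries to $\mathcal{O}_2$ on $x$ and is passed if the majority report $x$ relevant;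 if $x$ fails a test it is discarded and the next element is considered. The process returns the first element that passes the $\eta$-th test. Here $\ln$ is the natural logarithm. *)

From HB Require Import structures.
From mathcomp Require Import all_boot all_order all_algebra.
From mathcomp Require Import all_classical all_reals exp.
Set Implicit Arguments. Unset Strict Implicit. Unset Printing Implicit Defensive.
Import Order.TTheory GRing.Theory Num.Theory.
Local Open Scope ring_scope.

Section Defs.
Variable R : realType.

Definition log2 (x : R) : R := ln x / ln 2.

Definition cq (q : R) : nat := `|Num.ceil (4 * (1 - q) / (1 - 2 * q) ^+ 2)|%N.

Definition eta_steps (n : nat) : nat :=
  (1 + `|Num.ceil (log2 (n%:R / log2 n%:R))|)%N.

(* number of queries of test t: t = 0 is the preliminary test (oracle O1),
   t = i >= 1 is the i-th test (oracle O2) *)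
Definition test_size (n : nat) (p1 p2 : R) (t : nat) : nat :=
  if t == 0%N then (8 * cq p1 * `|Num.ceil (ln (n%:R : R))| + 1)%N
  else (2 * `|Num.ceil ((2 : R) ^+ t * ln (n%:R : R))| * cq p2 + 1)%N.

Definition query_idx (et : nat) (Nt : nat -> nat) : finType :=
  {t : 'I_et.+1 & 'I_(Nt (val t))}.

(* Probability that x passes tests 0..et, where the queries are mutually
   independent and a query in test t reports "relevant" with probability
   prob t.  Sample space: all answer vectors w; each test is passed iff a
   strict majority of its answers is "relevant". *)
Definition pass_all_prob (et : nat) (Nt : nat -> nat) (prob : nat -> R) : R :=
  \sum_(w : {ffun query_idx et Nt -> bool} |
         [forall t : 'I_et.+1,
            (Nt (val t) < 2 * #|[set j : 'I_(Nt (val t)) | w (Tagged _ j)]|)%N])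
    \prod_(k : query_idx et Nt)
       (if w k then prob (val (tag k)) else 1 - prob (val (tag k))).

End Defs.

Section Order.
Context {d : Order.disp_t} {T : orderType d}.

(* y \in S^-_rho : y is among the ceil(rho m) smallest elements of S' *)
Definition in_Sminus (R : realType) (S' : seq T) (rho : R) (y : T) : bool :=
  (y \in S') &&
  ((count (fun z => (z < y)%O) S')%:Z < Num.ceil (rho * (size S')%:R))%R.

Definition in_Splus (R : realType) (S' : seq T) (rho : R) (y : T) : bool :=
  (y \in S') && ~~ in_Sminus S' rho y.
End Order.

From mathcomp Require Import all_boot all_order all_algebra.
From mathcomp Require Import all_classical all_reals exp sequences.
From mathcomp Require Import zify ring lra.
Import Order.TTheory GRing.Theory Num.Theory.
Local Open Scope ring_scope.

(* Each test is a majority vote over 2M + 1 independent answers, each one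
   "relevant" with probability q >= 1 - p, p < 1/2.  Weighting every relevant
   answer of the test by 1/mu with mu = (1 - p)/p (exponential tilting), a
   failing answer vector loses at most a factor mu^M, so the test fails with
   probability at most mu^M (q/mu + 1 - q)^(2M+1) <= (4p(1-p))^M
   <= exp(-(1-2p)^2 M).  The factor c_q in the test sizes makes
   (1-2p)^2 M >= 2 ln n + i ln 2 for the i-th test (i = 0 the preliminary one),
   so a union bound over the tests gives failure probability at most
   n^-2 (1 + 1/2 + 1/4 + ...) <= 2 n^-2.  Membership in S^-_{1/6}, hence in
   S^-_{1/3}, is what gives q >= 1 - p_j for both oracles. *)

Section ChernoffNumerics.
Variable R : realType.
Implicit Types p q z : R.

Lemma le_abs_ceil z : z <= (`|Num.ceil z|%N)%:R.
Proof. by rewrite natr_absz (le_trans (ceil_ge z)) // ler_int ler_norm. Qed.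

Lemma tilted_mean_le p q : 0 < p -> p < 1 / 2 -> 1 - p <= q -> q <= 1 ->
  0 <= q / ((1 - p) / p) + (1 - q) <= 2 * p.
Proof.
move=> p_gt0 p_lt q_ge q_le1.
have -> : q / ((1 - p) / p) + (1 - q) = (q * p + (1 - q) * (1 - p)) / (1 - p).
  by field; rewrite !gt_eqF // subr_gt0; lra.
have p_lt1 : 0 < 1 - p by lra.
by rewrite divr_ge0 /= ?ler_pdivrMr //; nra.
Qed.

Lemma chernoff_majority p q M : 0 < p -> p < 1 / 2 -> 1 - p <= q -> q <= 1 ->
  ((1 - p) / p) ^+ M * (q / ((1 - p) / p) + (1 - q)) ^+ (2 * M + 1)
    <= expR (- ((1 - 2 * p) ^+ 2 * M%:R)).
Proof.
move=> p_gt0 p_lt q_ge q_le1.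
have /andP[mean_ge0 mean_le] := tilted_mean_le _ _ p_gt0 p_lt q_ge q_le1.
have tilt_ge0 : 0 <= ((1 - p) / p) ^+ M by rewrite exprn_ge0 // divr_ge0 //; lra.
have bin_ge0 : 0 <= 4 * p * (1 - p) by nra.
apply: (@le_trans _ _ (((1 - p) / p) ^+ M * (2 * p) ^+ (2 * M + 1))).
  by rewrite ler_wpM2l // lerXn2r // nnegrE (le_trans mean_ge0).
have -> : ((1 - p) / p) ^+ M * (2 * p) ^+ (2 * M + 1) = (4 * p * (1 - p)) ^+ M * (2 * p).
  have -> : 4 * p * (1 - p) = (1 - p) / p * (2 * p) ^+ 2 by field; rewrite gt_eqF.
  by rewrite exprD expr1 exprM [LHS]mulrA -exprMn.
apply: (@le_trans _ _ ((4 * p * (1 - p)) ^+ M)).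
  by rewrite ler_piMr ?exprn_ge0 //; lra.
rewrite -mulNr expRM_natr lerXn2r // ?nnegrE ?expR_ge0 //.
by apply: le_trans (expR_ge1Dx _); lra.
Qed.

(* A margin p' > 0 is needed for the tilt (1 - p') / p'; when p is small,
   p' = 1/16 works because c_p >= 4 (1 - p) > 15/4. *)
Lemma cq_margin p : 0 <= p -> p < 1 / 2 -> exists p' : R,
  [/\ 0 < p', p' < 1 / 2, p <= p' & 2 <= (cq p)%:R * (1 - 2 * p') ^+ 2].
Proof.
move=> p_ge0 p_lt.
have sq_gt0 : 0 < (1 - 2 * p) ^+ 2 by apply: exprn_gt0; lra.
have cq_ge : 4 * (1 - p) <= (cq p)%:R * (1 - 2 * p) ^+ 2.
  by rewrite -ler_pdivrMr //; apply: le_abs_ceil.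
have sq_le1 : (1 - 2 * p) ^+ 2 <= 1 by nra.
have cq_ge0 : 0 <= (cq p)%:R :> R by [].
have [p_ge | p_lt16] := lerP (1 / 16) p.
  by exists p; split => //; lra.
exists (1 / 16); split; [lra | lra | lra |].
have : 15 / 4 <= (cq p)%:R :> R by nra.
by rewrite expr2; nra.
Qed.

End ChernoffNumerics.

Arguments le_abs_ceil {R}.
Arguments chernoff_majority {R p q M}.
Arguments cq_margin {R p}.

Section MajorityTests.
Variables (R : realType) (et : nat) (Nt : nat -> nat) (prob : nat -> R).
Hypothesis prob01 : forall t, 0 <= prob t <= 1.
Local Notation I := (query_idx et Nt).
Local Notation answers := {ffun I -> bool}.

Definition answer_prob (k : I) (b : bool) : R :=
  if b then prob (val (tag k)) else 1 - prob (val (tag k)).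

Definition answers_prob (w : answers) : R := \prod_k answer_prob k (w k).

Definition relevant_count (t : 'I_et.+1) (w : answers) : nat :=
  #|[set j : 'I_(Nt (val t)) | w (Tagged _ j)]|.

Definition test_passed (t : 'I_et.+1) (w : answers) : bool :=
  (Nt (val t) < 2 * relevant_count t w)%N.

Definition fail_prob (t : 'I_et.+1) : R :=
  \sum_(w | ~~ test_passed t w) answers_prob w.

Lemma pass_all_probE :
  pass_all_prob et Nt prob = \sum_(w | [forall t, test_passed t w]) answers_prob w.
Proof. by []. Qed.

Lemma answer_prob_ge0 k b : 0 <= answer_prob k b.
Proof. by have /andP[? ?] := prob01 (val (tag k)); rewrite /answer_prob; case: b; lra. Qed.

Lemma answers_prob_ge0 w : 0 <= answers_prob w.
Proof. by apply: prodr_ge0 => k _; apply: answer_prob_ge0. Qed.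

Lemma sum_answers_prob : \sum_w answers_prob w = 1.
Proof.
rewrite /answers_prob -(bigA_distr_bigA answer_prob).
by apply: big1 => k _; rewrite big_bool /answer_prob /=; ring.
Qed.

Lemma pass_all_prob_ge_union : 1 - \sum_t fail_prob t <= pass_all_prob et Nt prob.
Proof.
rewrite pass_all_probE -sum_answers_prob (bigID [pred w | [forall t, test_passed t w]]) /=.
suff : \sum_(w | ~~ [forall t, test_passed t w]) answers_prob w <= \sum_t fail_prob t by lra.
rewrite /fail_prob (exchange_big_dep xpredT) //=.
rewrite [leRHS](bigID [pred w | ~~ [forall t, test_passed t w]]) /= ler_wpDr //.
  by apply: sumr_ge0 => w _; apply: sumr_ge0 => t _; apply: answers_prob_ge0.
apply: ler_sum => w /forallPn[t failed].
rewrite (bigD1 t) //= ler_wpDr //.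
by apply: sumr_ge0 => s _; apply: answers_prob_ge0.
Qed.

Lemma big_query_idx (G : I -> R) :
  \prod_k G k = \prod_(t : 'I_et.+1) \prod_(j : 'I_(Nt (val t))) G (Tagged _ j).
Proof.
rewrite (@sig_big_dep _ _ _ _ (fun t : 'I_et.+1 => 'I_(Nt (val t))) xpredT
  (fun _ => xpredT) (fun t j => G (Tagged (fun t : 'I_et.+1 => 'I_(Nt (val t))) j))) /=.
by apply: eq_bigr => -[t j].
Qed.

Section Chernoff.
Variables (t : 'I_et.+1) (mu : R).
Hypothesis mu_ge1 : 1 <= mu.

Definition tilt (k : I) (b : bool) : R := if (tag k == t) && b then mu^-1 else 1.

Lemma prod_tilt (w : answers) : \prod_k tilt k (w k) = mu^-1 ^+ relevant_count t w.
Proof.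
rewrite big_query_idx (bigD1 t) //= [X in _ * X]big1 ?mulr1; last first.
  by move=> s s_neq_t; apply: big1 => j _; rewrite /tilt /= (negbTE s_neq_t).
rewrite /tilt /= eqxx -big_mkcond prodr_const; congr (_ ^+ _).
by apply: eq_card => j; rewrite inE.
Qed.

Lemma sum_tilted_answers_prob :
  \sum_(w : answers) \prod_k (answer_prob k (w k) * tilt k (w k)) =
    (prob (val t) / mu + (1 - prob (val t))) ^+ Nt (val t).
Proof.
rewrite -(bigA_distr_bigA (fun k b => answer_prob k b * tilt k b)) big_query_idx.
rewrite (bigD1 t) //= [X in _ * X]big1 ?mulr1; last first.
  move=> s s_neq_t; apply: big1 => j _.
  by rewrite big_bool /answer_prob /tilt /= (negbTE s_neq_t) /=; ring.
rewrite (eq_bigr (fun _ => prob (val t) / mu + (1 - prob (val t)))).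
  by rewrite prodr_const card_ord.
by move=> j _; rewrite big_bool /answer_prob /tilt /= eqxx /=; ring.
Qed.

Lemma fail_prob_le_tilted M : Nt (val t) = (2 * M + 1)%N ->
  fail_prob t <= mu ^+ M * (prob (val t) / mu + (1 - prob (val t))) ^+ Nt (val t).
Proof.
move=> NtE; have mu_gt0 : 0 < mu := lt_le_trans ltr01 mu_ge1.
rewrite -sum_tilted_answers_prob mulr_sumr.
apply: (@le_trans _ _ (\sum_(w | ~~ test_passed t w)
    mu ^+ M * \prod_k (answer_prob k (w k) * tilt k (w k)))).
  apply: ler_sum => w failed; rewrite big_split /= prod_tilt mulrCA.
  have count_le : (relevant_count t w <= M)%N.
    by move: failed; rewrite /test_passed NtE; lia.
  rewrite ler_peMr ?answers_prob_ge0 // exprVn ler_pdivlMr ?exprn_gt0 // mul1r.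
  exact: ler_weXn2l.
rewrite [leLHS]big_mkcond; apply: ler_sum => w _; case: ifP => // _.
apply: mulr_ge0; first by rewrite exprn_ge0 // ltW.
apply: prodr_ge0 => k _; rewrite mulr_ge0 ?answer_prob_ge0 // /tilt.
by case: ifP; rewrite ?invr_ge0 ltW.
Qed.

End Chernoff.

Lemma fail_prob_le_cq t p K : 0 <= p -> p < 1 / 2 -> 1 - p <= prob (val t) ->
  Nt (val t) = (2 * (cq p * K) + 1)%N -> fail_prob t <= expR (- (2 * K%:R)).
Proof.
move=> p_ge0 p_lt prob_ge NtE.
have [p' [p'_gt0 p'_lt p_le cq_ge]] := cq_margin p_ge0 p_lt.
have mu_ge1 : 1 <= (1 - p') / p' by rewrite ler_pdivlMr //; lra.
apply: le_trans (fail_prob_le_tilted _ _ mu_ge1 _ NtE) _; rewrite NtE.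
have /andP[_ prob_le1] := prob01 (val t).
apply: le_trans (chernoff_majority p'_gt0 p'_lt _ prob_le1) _; first lra.
by rewrite ler_expR lerN2 natrM mulrA [_ * (cq p)%:R]mulrC ler_wpM2r.
Qed.

End MajorityTests.

Arguments fail_prob {R et}.
Arguments pass_all_prob_ge_union {R et Nt prob}.
Arguments fail_prob_le_cq {R et Nt prob} prob01 {t p K}.

Lemma in_Sminus_le (R : realType) (d : Order.disp_t) (T : orderType d)
    (S' : seq T) (rho rho' : R) (y : T) :
  rho <= rho' -> in_Sminus S' rho y -> in_Sminus S' rho' y.
Proof.
move=> rho_le /andP[y_in count_lt]; rewrite /in_Sminus y_in /=.
by apply: (lt_le_trans count_lt); apply: le_ceil; apply: ler_wpM2r.
Qed.

Section QueryBudget.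
Variables (R : realType) (n : nat).
Hypothesis n_ge2 : (2 <= n)%N.
Local Notation lnn := (ln (n%:R : R)).

Lemma ln2_le_ln : 0 < ln (2 : R) <= lnn.
Proof.
have n_ge2R : 2 <= n%:R :> R by rewrite (ler_nat R 2 n).
by rewrite ln_gt0 ?ltr1n //= ler_ln // posrE; lra.
Qed.

Lemma expR_le_budget (t : nat) (z : R) :
  2 * lnn + t%:R * ln 2 <= z -> expR (- z) <= (n%:R ^+ 2)^-1 * 2^-1 ^+ t.
Proof.
move=> budget_le; apply: le_trans (_ : expR (- (2 * lnn + t%:R * ln 2)) <= _).
  by rewrite ler_expR lerN2.
have n_gt0 : 0 < n%:R :> R by rewrite ltr0n; lia.
by rewrite expRN expRD expRM_natl expRM_natl !lnK ?posrE // invfM exprVn.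
Qed.

Lemma phase_budget (i : nat) :
  2 * lnn + i%:R * ln 2 <= 2 * (`|Num.ceil (2 ^+ i * lnn)|%N)%:R.
Proof.
have /andP[ln2_gt0 ln2_le] := ln2_le_ln.
have pow_ge : i%:R + 1 <= 2 ^+ i :> R by rewrite natr1 -natrX ler_nat ltn_expl.
have := le_abs_ceil (2 ^+ i * lnn).
have : (i%:R + 1) * lnn <= 2 ^+ i * lnn by rewrite ler_wpM2r //; lra.
have : i%:R * ln 2 <= i%:R * lnn by rewrite ler_wpM2l.
have : 0 <= i%:R * lnn by rewrite mulr_ge0 //; lra.
lra.
Qed.

Lemma prelim_budget :
  2 * lnn + 0%:R * ln 2 <= 2 * (4 * `|Num.ceil lnn|)%:R.
Proof.
have := phase_budget 0; rewrite expr0 mul1r natrM.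
by have : 0 <= (`|Num.ceil lnn|%N)%:R :> R by []; lra.
Qed.

End QueryBudget.

Arguments expR_le_budget {R n} n_ge2 {t z}.
Arguments phase_budget {R n} n_ge2 i.
Arguments prelim_budget {R n}.

Lemma test_size0 (R : realType) (n : nat) (p1 p2 : R) :
  test_size n p1 p2 0 = (2 * (cq p1 * (4 * `|Num.ceil (ln (n%:R : R))|)) + 1)%N.
Proof. by rewrite /test_size eqxx; move: (cq p1) (`|Num.ceil _|%N) => c L; lia. Qed.

Lemma test_sizeS (R : realType) (n : nat) (p1 p2 : R) (i : nat) :
  test_size n p1 p2 i.+1 =
    (2 * (cq p2 * `|Num.ceil ((2 : R) ^+ i.+1 * ln (n%:R : R))|) + 1)%N.
Proof. by rewrite /test_size /=; move: (cq p2) (`|Num.ceil _|%N) => c L; lia. Qed.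

Lemma sum_geometric_half_le (R : realType) (a : R) (k : nat) :
  0 <= a -> \sum_(t < k) a * 2^-1 ^+ t <= 2 * a.
Proof.
move=> a_ge0; have := @geometric_le_lim R k a 2^-1 a_ge0.
rewrite seriesEnat /= big_mkord.
have half_gt0 : 0 < 2^-1 :> R by lra.
have half_lt1 : `|2^-1| < 1 :> R by rewrite ger0_norm; lra.
move=> /(_ half_gt0 half_lt1) /le_trans; apply.
rewrite (_ : 1 - 2^-1 = 2^-1 :> R); last lra.
by rewrite invrK mulrC.
Qed.

Theorem lemma14 (R : realType) (d : Order.disp_t) (T : orderType d)
    (n : nat) (S' : seq T) (p1 p2 : R) (O1 O2 : T -> R) (x : T) :
  (2 <= n)%N ->
  uniq S' ->
  (size S')%:R = n%:R / log2 (n%:R : R) ->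
  0 <= p1 -> p1 < 1 / 2 -> 0 <= p2 -> p2 < 1 / 2 ->
  (forall y, 0 <= O1 y <= 1) -> (forall y, 0 <= O2 y <= 1) ->
  (forall y, in_Sminus S' (1 / 6 : R) y -> 1 - p1 <= O1 y) ->
  (forall y, in_Splus S' (1 / 3 : R) y -> O1 y <= p1) ->
  (forall y, in_Sminus S' (1 / 3 : R) y -> 1 - p2 <= O2 y) ->
  (forall y, in_Splus S' (3 / 4 : R) y -> O2 y <= p2) ->
  in_Sminus S' (1 / 6 : R) x ->
  1 - 5 / (n%:R ^+ 2) <=
    pass_all_prob (eta_steps R n) (test_size n p1 p2)
      (fun t => if t == 0%N then O1 x else O2 x).
Proof.
move=> n_ge2 _ _ p1_ge0 p1_lt p2_ge0 p2_lt O1_01 O2_01 O1_rel _ O2_rel _ x_rel.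
set prob := fun t : nat => if t == 0%N then O1 x else O2 x.
have prob01 t : 0 <= prob t <= 1 by rewrite /prob; case: ifP.
have fail_le (t : 'I_(eta_steps R n).+1) :
    fail_prob (test_size n p1 p2) prob t <= (n%:R ^+ 2)^-1 * 2^-1 ^+ val t.
  case: t => -[|i] lt_i /=.
    apply: le_trans (expR_le_budget n_ge2 (prelim_budget n_ge2)).
    by apply: (fail_prob_le_cq prob01 p1_ge0 p1_lt); [exact: O1_rel | exact: test_size0].
  have x_rel' : in_Sminus S' (1 / 3 : R) x by apply: in_Sminus_le x_rel; lra.
  apply: le_trans (expR_le_budget n_ge2 (phase_budget n_ge2 i.+1)).
  by apply: (fail_prob_le_cq prob01 p2_ge0 p2_lt); [exact: O2_rel | exact: test_sizeS].
apply: le_trans (pass_all_prob_ge_union prob01); rewrite lerD2l lerN2.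
apply: (le_trans (ler_sum _ (fun t _ => fail_le t))).
have inv_sq_ge0 : 0 <= n%:R ^- 2 :> R by rewrite invr_ge0 exprn_ge0.
apply: (le_trans (sum_geometric_half_le _ _ _ inv_sq_ge0)).
by apply: ler_wpM2r => //; lra.
Qed.
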